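(* Let $R$ be an NC-nilpotent algebra, $\overline S\subset R_{ab}-\{0\}$ a multiplicative subset, and $S=\pi^{-1}(\overline S)\subset R$ its preimage under the abelianization map $\pi:R\to R_{ab}$. Then the Ore localization $R[S^{-1}]$ is NC-nilpotent, and for every $d\ge0$ $$\mathrm{gr}^d_F(R[S^{-1}])\cong \mathrm{gr}^d_F(R)[\overline S^{-1}],$$ where on the right is the usual module of fractions of the $R_{ab}$-module $\mathrm{gr}^d_F(R)$.
   Context: Algebras are associative unital $\mathbf{C}$-algebras. $R_{ab}=R/[R,R]$. NC-filtration: with $R^{\rm Lie}_1=R$, $R^{\rm Lie}_m=[R,R^{\rm Lie}_{m-1}]$ ($[a,b]=ab-ba$), $F^dR=\sum_m\sum_{i_1+\dots+i_m-m=d}R\,R^{\rm Lie}_{i_1}R\cdots R\,R^{\rm Lie}_{i_m}R$; $\mathrm{gr}^d_F R=F^dR/F^{d+1}R$, which is a module over $\mathrm{gr}^0_FR=R_{ab}$. $R$ is NC-nilpotent if $F^iR=0$ for $i\gg0$. For $R$ NC-nilpotent, the set $S$ satisfies the left and right Ore conditions, so the ring of fractions $R[S^{-1}]$ exists: it is equipped with a homomorphism $R\to R[S^{-1}]$ sending elements of $S$ to invertible elements and is universal with this property. *)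

From HB Require Import structures.
From mathcomp Require Import all_boot all_order all_algebra.
From mathcomp Require Import complex Rstruct.

Set Implicit Arguments.
Unset Strict Implicit.
Unset Printing Implicit Defensive.

Import GRing.Theory.
Local Open Scope ring_scope.

Definition CC : fieldType := complex Rdefinitions.R.

Section NCFiltration.
Variable A : algType CC.

(* R^Lie_m : R^Lie_1 = R, R^Lie_{m+1} = [R, R^Lie_m] (linear span of the
   commutators [a, b] = ab - ba with a in R, b in R^Lie_m).  Since
   c [a,b] = [c a, b] and -[a,b] = [-a,b], the additive span is the linear
   span. *)
Inductive lie_term : nat -> A -> Prop :=
  | lie_one (a : A) : lie_term 1 a
  | lie_comm m (a b : A) : lie_term m.+1 b -> lie_term m.+2 (a * b - b * a)
  | lie_zero m : lie_term m 0
  | lie_add m (x y : A) : lie_term m x -> lie_term m y -> lie_term m (x + y).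

Definition nc_word (a0 : A) (s : seq (nat * A * A)) : A :=
  foldl (fun acc t => acc * t.1.2 * t.2) a0 s.

(* Generators of F^d R : elements of R R^Lie_{i1} R ... R R^Lie_{im} R
   with m >= 1, all i_j >= 1 and i1 + ... + im - m = d. *)
Definition nc_gen (d : nat) (y : A) : Prop :=
  exists (a0 : A) (s : seq (nat * A * A)),
    [/\ s <> [::],
        (forall t, List.In t s -> (0 < t.1.1)%N /\ lie_term t.1.1 t.1.2),
        (\sum_(t <- s) t.1.1)%N = (d + size s)%N
      & y = nc_word a0 s].

(* F^d R : the linear span of the generators (products with elements of R
   absorb scalars, so the additive span is the linear span). *)
Inductive ncF (d : nat) : A -> Prop :=
  | ncF_gen y : nc_gen d y -> ncF d y
  | ncF_zero : ncF d 0
  | ncF_add x y : ncF d x -> ncF d y -> ncF d (x + y).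

Definition NC_nilpotent : Prop :=
  exists n : nat, forall i : nat, (n <= i)%N -> forall x : A, ncF i x -> x = 0.

Definition invertible (x : A) : Prop := exists y : A, x * y = 1 /\ y * x = 1.

(* S is the preimage pi^{-1}(Sbar) under pi : R -> R_ab = R / F^1 R of a
   multiplicative subset Sbar of R_ab - {0}:  S is a union of cosets of
   [R,R] = F^1 R, contains 1, is closed under products, and avoids F^1 R
   (i.e. pi(s) <> 0). *)
Definition preimage_of_mult_subset_ab (S : A -> Prop) : Prop :=
  [/\ forall x y : A, S x -> ncF 1 (x - y) -> S y,
      S 1,
      forall x y : A, S x -> S y -> S (x * y)
    & forall x : A, S x -> ~ ncF 1 x].

End NCFiltration.

Definition is_ring_of_fractions (A B : algType CC) (S : A -> Prop)
    (iota : {lrmorphism A -> B}) : Prop :=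
  (forall s, S s -> invertible (iota s)) /\
  (forall (T : algType CC) (g : {lrmorphism A -> T}),
     (forall s, S s -> invertible (g s)) ->
     (exists h : {lrmorphism B -> T}, forall a, h (iota a) = g a) /\
     (forall h1 h2 : {lrmorphism B -> T},
        (forall a, h1 (iota a) = g a) -> (forall a, h2 (iota a) = g a) ->
        forall b, h1 b = h2 b)).

(* gr^d_F(A)[Sbar^{-1}] is presented by pairs (m, s) with m in F^d A
   (representing the class of m in gr^d = F^d/F^{d+1}) and s in S (a lift of
   an element of Sbar); two pairs are equal iff
   t (s' m - s m') = 0 in gr^d for some t in Sbar.  (R_ab acts on gr^d by
   left multiplication of lifts.)
   gr^d_F(B) is presented by elements of F^d B modulo F^{d+1} B, an R_ab-module
   through iota.  The following says that phi : (m, s) |-> phi m s induces an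
   isomorphism of R_ab-modules  gr^d_F(A)[Sbar^{-1}] ~= gr^d_F(B). *)
Definition frac_gr_iso (A B : algType CC) (S : A -> Prop)
    (iota : {lrmorphism A -> B}) (d : nat) (phi : A -> A -> B) : Prop :=
  let frac_eq (m s m' s' : A) :=
    exists t, S t /\ ncF (d.+1) (t * (s' * m - s * m')) in
  [/\
      forall m s, ncF d m -> S s -> ncF d (phi m s),
      (* well defined and injective on classes *)
      forall m s m' s', ncF d m -> S s -> ncF d m' -> S s' ->
        (frac_eq m s m' s' <-> ncF (d.+1) (phi m s - phi m' s')),
      forall y : B, ncF d y ->
        exists m s, [/\ ncF d m, S s & ncF (d.+1) (phi m s - y)],
      (* additive: m/s + m'/s' = (s' m + s m')/(s s') *)
      forall m s m' s', ncF d m -> S s -> ncF d m' -> S s' ->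
        ncF (d.+1) (phi (s' * m + s * m') (s * s') - (phi m s + phi m' s'))
    &
      forall r m s, ncF d m -> S s ->
        ncF (d.+1) (phi (r * m) s - iota r * phi m s)].

(* NC-nilpotence makes S an Ore set: for x in F^d R the commutator [s, x] lies
   in F^{d+1} R, so the right Ore condition and right reversibility follow by
   descending induction along the finite filtration.  Letting R act on its
   module of right fractions shows that the kernel of R -> R[S^-1] is the right
   S-torsion, and the universal property shows that every element of R[S^-1]
   is a fraction a s^-1.  Since s^-1 commutes with the image of F^d R up to
   terms one step deeper, F^d R[S^-1] is the right ideal generated by the image
   of F^d R.  Hence R[S^-1] is NC-nilpotent, and m/s |-> s^-1 m induces
   gr^d(R)[Sbar^-1] ~= gr^d(R[S^-1]). *)

From HB Require Import structures.
From mathcomp Require Import all_boot all_order all_algebra.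
From mathcomp Require Import complex Rstruct.
From mathcomp Require Import zify boolp.

Set Implicit Arguments.
Unset Strict Implicit.
Unset Printing Implicit Defensive.

Import GRing.Theory.
Local Open Scope ring_scope.

(** * The NC-filtration *)

Lemma commrM3 (R : pzRingType) (r w z a : R) : r * (w * z * a) - w * z * a * r =
  (r * w - w * r) * z * a + w * (r * z - z * r) * a + w * z * (r * a - a * r).
Proof. by rewrite !(mulrBl, mulrBr) !mulrA !addrA !subrK. Qed.

Section NCFiltration.
Variable A : algType CC.
Implicit Types (x y r a : A) (s : seq (nat * A * A)).

Definition lie_factors s :=
  forall t, List.In t s -> (0 < t.1.1)%N /\ lie_term t.1.1 t.1.2.

Lemma lie_factors_rcons s t :
  lie_factors (rcons s t) <-> lie_factors s /\ (0 < t.1.1)%N /\ lie_term t.1.1 t.1.2.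
Proof.
rewrite /lie_factors -cats1; split=> [H|[Hs Ht] u /List.in_app_iff [/Hs //|[<-//|[]]]].
by split=> [u hu|]; apply: H; apply/List.in_app_iff; [left | right; left].
Qed.

Lemma size_le_lie_degree s : lie_factors s -> (size s <= \sum_(t <- s) t.1.1)%N.
Proof.
elim: s => [|u s IHs] Hs; first by rewrite big_nil.
rewrite big_cons /=; have [u0 _] := Hs u (or_introl erefl).
have := IHs (fun w hw => Hs w (or_intror hw)); lia.
Qed.

Lemma nc_word_rcons a0 s t : nc_word a0 (rcons s t) = nc_word a0 s * t.1.2 * t.2.
Proof. by rewrite /nc_word foldl_rcons. Qed.

Lemma nc_wordMl r a0 s : nc_word (r * a0) s = r * nc_word a0 s.
Proof. by elim: s r a0 => [|t s IH] r a0 //=; rewrite /nc_word /= -!mulrA -IH !mulrA. Qed.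

Lemma ncF_nc_word d a0 s : s <> [::] -> lie_factors s ->
  (\sum_(t <- s) t.1.1)%N = (d + size s)%N -> ncF d (nc_word a0 s).
Proof. by move=> ne v e; apply: ncF_gen; exists a0, s. Qed.

Lemma ncF_mull d r x : ncF d x -> ncF d (r * x).
Proof.
elim=> [_ [a0 [s [ne v e ->]]]| |u w _ Hu _ Hw].
- by rewrite -nc_wordMl; apply: ncF_nc_word.
- by rewrite mulr0; apply: ncF_zero.
- by rewrite mulrDr; apply: ncF_add.
Qed.

Lemma ncF_opp d x : ncF d x -> ncF d (- x).
Proof. by rewrite -mulN1r; apply: ncF_mull. Qed.

Lemma ncF_sub d x y : ncF d x -> ncF d y -> ncF d (x - y).
Proof. by move=> hx hy; apply: ncF_add => //; apply: ncF_opp. Qed.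

Lemma ncF_mulr d r x : ncF d x -> ncF d (x * r).
Proof.
elim=> [_ [a0 [s [ne v e ->]]]| |u w _ Hu _ Hw].
- case/lastP: s ne v e => [//|s t] _ /lie_factors_rcons v.
  rewrite big_rcons size_rcons /= => e.
  have -> : nc_word a0 (rcons s t) * r = nc_word a0 (rcons s (t.1, t.2 * r)).
    by rewrite !nc_word_rcons /= !mulrA.
  apply: ncF_nc_word; first by case: (s).
  + exact/lie_factors_rcons.
  + by rewrite big_rcons size_rcons.
- by rewrite mul0r; apply: ncF_zero.
- by rewrite mulrDl; apply: ncF_add.
Qed.

Lemma ncF_mul p q x y : ncF p x -> ncF q y -> ncF (p + q) (x * y).
Proof.
move=> hx; elim=> [_ [b0 [s2 [ne2 v2 e2 ->]]]| |u w _ Hu _ Hw]; last first.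
- by rewrite mulrDr; apply: ncF_add.
- by rewrite mulr0; apply: ncF_zero.
elim: hx => [_ [a0 [s1 [ne1 v1 e1 ->]]]| |u w _ Hu _ Hw]; last first.
- by rewrite mulrDl; apply: ncF_add.
- by rewrite mul0r; apply: ncF_zero.
case/lastP: s1 ne1 v1 e1 => [//|s1 t] _ /lie_factors_rcons v1.
rewrite big_rcons size_rcons /= => e1.
have -> : nc_word a0 (rcons s1 t) * nc_word b0 s2 =
          nc_word a0 (rcons s1 (t.1, t.2 * b0) ++ s2).
  by rewrite /nc_word foldl_cat -!/(nc_word _ _) -nc_wordMl !nc_word_rcons /= !mulrA.
apply: ncF_nc_word; first by case: (s1).
- move=> u /List.in_app_iff [|]; last exact: v2.
  by move: u; apply/lie_factors_rcons.
- by rewrite big_cat big_rcons /= size_cat size_rcons e2; lia.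
Qed.

Lemma ncF_lie i x : lie_term i x -> (0 < i)%N -> ncF i.-1 x.
Proof.
move=> hx i0; rewrite -[x]mul1r -[_ * x]mulr1 -[1 * x * 1]/(nc_word 1 [:: (i, x, 1)]).
apply: ncF_nc_word => //=; first by move=> t [<-|[]].
by rewrite big_seq1 /=; lia.
Qed.

Lemma ncF0 x : ncF 0 x.
Proof. exact: (ncF_lie (lie_one x)). Qed.

Lemma ncF1_comm a b : ncF 1 (a * b - b * a).
Proof. by apply: (@ncF_lie 2) => //; apply: lie_comm; apply: lie_one. Qed.

Lemma lie_termS i x : lie_term i.+2 x -> lie_term i.+1 x.
Proof.
move E: i.+2 => j h; elim: h i E => [a|m a b _ IH|m|m u w _ IHu _ IHw] i E.
- by [].
- by case: i E => [|i] [Em]; [apply: lie_one | subst m; apply: lie_comm; apply: IH].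
- exact: lie_zero.
- by apply: lie_add; [apply: IHu | apply: IHw].
Qed.

Lemma lie_term_le i k x : (0 < k <= i)%N -> lie_term i x -> lie_term k x.
Proof.
elim: i => [|i IH] hk h; first by lia.
have [->//|lt_ki] := eqVneq k i.+1.
case: i IH h hk lt_ki => [|i] IH h hk lt_ki; first by lia.
by apply: IH; [lia | apply: lie_termS].
Qed.

Lemma ncF_nc_word_le a0 s e d : lie_factors s ->
  (\sum_(t <- s) t.1.1)%N = (e + size s)%N -> (d <= e)%N -> ncF d (nc_word a0 s).
Proof.
elim/last_ind: s e d => [|s t IH] e d v es hd.
  by rewrite big_nil /= in es; rewrite (_ : d = 0%N); [apply: ncF0 | lia].
move/lie_factors_rcons: v => [v [t0 tl]]; have hsz := size_le_lie_degree v.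
rewrite big_rcons size_rcons /= in es; rewrite nc_word_rcons.
set e0 := (\sum_(u <- s) u.1.1 - size s)%N.
have IHs d' : (d' <= e0)%N -> ncF d' (nc_word a0 s).
  by move=> hd'; apply: (IH e0); rewrite ?subnK.
rewrite -[d]addn0; apply: ncF_mul; last exact: ncF0.
have [le_de0|lt_e0d] := leqP d e0.
  by rewrite -[d]addn0; apply: ncF_mul; [apply: IHs | apply: ncF0].
have -> : d = (e0 + (d - e0).+1.-1)%N by lia.
apply: ncF_mul; first exact: IHs.
by apply: ncF_lie => //; apply: lie_term_le tl; lia.
Qed.

Lemma ncF_le p q x : (q <= p)%N -> ncF p x -> ncF q x.
Proof.
move=> hq; elim=> [_ [a0 [s [ne v e ->]]]| |u w _ Hu _ Hw].
- exact: ncF_nc_word_le e hq.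
- exact: ncF_zero.
- exact: ncF_add.
Qed.

Lemma ncF_comm q r y : ncF q y -> ncF q.+1 (r * y - y * r).
Proof.
elim=> [_ [a0 [s [ne v e ->]]]| |u w _ Hu _ Hw]; last first.
- by rewrite mulrDr mulrDl opprD addrACA; apply: ncF_add.
- by rewrite mulr0 mul0r subr0; apply: ncF_zero.
elim/last_ind: s ne v q e => [//|s t IH] _ v q e.
move/lie_factors_rcons: v => [v [t0 tl]]; have hsz := size_le_lie_degree v.
rewrite big_rcons size_rcons /= in e; rewrite nc_word_rcons commrM3.
set e0 := (\sum_(u <- s) u.1.1 - size s)%N.
have hw : ncF e0 (nc_word a0 s).
  by apply: (@ncF_nc_word_le a0 s e0); rewrite ?subnK.
have hwc : ncF e0.+1 (r * nc_word a0 s - nc_word a0 s * r).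
  case: s IH v hsz @e0 {hw e} => [|u s] IH v hsz e0.
    by rewrite /e0 big_nil; apply: ncF1_comm.
  by apply: IH; rewrite ?subnK.
have hz : ncF t.1.1.-1 t.1.2 by apply: ncF_lie.
have hrz : ncF t.1.1.+1.-1 (r * t.1.2 - t.1.2 * r).
  by apply: ncF_lie => //; case: (t.1.1) tl t0 => // i tl _; apply: lie_comm.
have -> : q.+1 = (e0.+1 + t.1.1.-1 + 0)%N by lia.
apply: ncF_add; first apply: ncF_add.
- by apply: ncF_mul; [apply: ncF_mul | apply: ncF0].
- have -> : (e0.+1 + t.1.1.-1 + 0 = e0 + t.1.1.+1.-1 + 0)%N by lia.
  by apply: ncF_mul; [apply: ncF_mul | apply: ncF0].
- have -> : (e0.+1 + t.1.1.-1 + 0 = e0 + t.1.1.-1 + 1)%N by lia.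
  by apply: ncF_mul; [apply: ncF_mul | apply: ncF1_comm].
Qed.

End NCFiltration.

Section NCFiltrationMorphism.
Variables (A B : algType CC) (f : {lrmorphism A -> B}).

Lemma lie_term_rmorph i x : lie_term i x -> lie_term i (f x).
Proof.
elim=> [a|m a b _ IH|m|m u w _ IHu _ IHw].
- exact: lie_one.
- by rewrite rmorphB !rmorphM; apply: lie_comm.
- by rewrite rmorph0; apply: lie_zero.
- by rewrite rmorphD; apply: lie_add.
Qed.

Lemma nc_word_rmorph a0 s :
  f (nc_word a0 s) = nc_word (f a0) [seq (t.1.1, f t.1.2, f t.2) | t <- s].
Proof.
by elim: s a0 => [|t s IH] a0 //=; rewrite /nc_word /= -/(nc_word _ _) IH !rmorphM.
Qed.

Lemma ncF_rmorph d x : ncF d x -> ncF d (f x).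
Proof.
elim=> [_ [a0 [s [ne v e ->]]]| |u w _ Hu _ Hw].
- rewrite nc_word_rmorph; apply: ncF_nc_word; first by case: (s) ne.
  + move=> _ /List.in_map_iff [t [<- /v [t0 tl]]]; split=> //.
    exact: lie_term_rmorph.
  + by rewrite big_map size_map.
- by rewrite rmorph0; apply: ncF_zero.
- by rewrite rmorphD; apply: ncF_add.
Qed.

End NCFiltrationMorphism.

(** * Ore conditions from NC-nilpotence *)

Section NCNilpotent.
Variables (A : algType CC) (N : nat).
Hypothesis ncF_N : forall i, (N <= i)%N -> forall x : A, ncF i x -> x = 0.

Lemma ncF_nilpotent_ind (P : nat -> A -> Prop) :
    (forall d, P d 0) ->
    (forall d x, ncF d x -> (forall y, ncF d.+1 y -> P d.+1 y) -> P d x) ->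
  forall d x, ncF d x -> P d x.
Proof.
move=> P0 Pstep; suff H n d : (N - d <= n)%N -> forall x, ncF d x -> P d x.
  by move=> d; apply: (H (N - d)%N).
elim: n d => [|n IH] d hd x hx; first by rewrite (ncF_N _ hx) //; lia.
by apply: Pstep hx _ => y hy; apply: IH hy; lia.
Qed.

Variable S : A -> Prop.
Hypothesis SM : forall x y, S x -> S y -> S (x * y).

Lemma ncnil_ore x s : S s -> exists y t, S t /\ x * t = s * y.
Proof.
pose P (_ : nat) x := forall s, S s -> exists y t, S t /\ x * t = s * y.
apply: (@ncF_nilpotent_ind P _ _ 0 x (ncF0 x)) => [d s' hs'|d {}x hx IH s' hs'].
  by exists 0, s'; rewrite mul0r mulr0.
have [y [t [ht e]]] := IH _ (ncF_comm s' hx) s' hs'.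
exists (x * t - y), (s' * t); split; first exact: SM.
by rewrite mulrBr -e mulrBl !mulrA opprB addrC addrNK.
Qed.

Lemma ncnil_rannihilator s x : S s -> s * x = 0 -> exists t, S t /\ x * t = 0.
Proof.
move=> hs; pose P (_ : nat) x := s * x = 0 -> exists t, S t /\ x * t = 0.
apply: (@ncF_nilpotent_ind P _ _ 0 x (ncF0 x)) => [d _|d {}x hx IH e].
  by exists s; rewrite mul0r.
have e' : s * (s * x - x * s) = 0 by rewrite mulrBr !mulrA e mul0r -mulrA e mulr0 subrr.
have [t [ht et]] := IH _ (ncF_comm s hx) e'.
exists (s * t); split; first exact: SM.
by move: et; rewrite mulrBl e mul0r sub0r mulrA => /eqP; rewrite oppr_eq0 => /eqP.
Qed.

End NCNilpotent.

(** * The algebra of linear endomorphisms of a module *)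

Section LinearEndomorphisms.
Variables (R : comPzRingType) (M : lmodType R).
Hypothesis M_nontrivial : exists v : M, v != 0.

(* The argument makes the type depend on the nontriviality of M, which the ring
   instance below needs for 1 != 0. *)
Definition lend_of (_ : exists v : M, v != 0) := {f : M -> M | `[< linear f >]}.
Local Notation lend := (lend_of M_nontrivial).
HB.instance Definition _ := Choice.on lend.

Definition lend_fun (f : lend) : M -> M := sval f.
Coercion lend_fun : lend_of >-> Funclass.

Definition to_lend f (fL : linear f) : lend := exist _ f (asboolT fL).

Lemma lend_linear (f : lend) : linear f.
Proof. exact: asboolW (valP f). Qed.

Lemma lendD (f : lend) : {morph f : x y / x + y}.
Proof. exact: (GRing.semilinear_linear (lend_linear f)).2. Qed.

Lemma lendZ (f : lend) k : {morph f : x / k *: x}.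
Proof. exact: (GRing.semilinear_linear (lend_linear f)).1. Qed.

Lemma lendP (f g : lend) : f =1 g -> f = g.
Proof. by move=> fg; apply: val_inj; apply: funext. Qed.

Lemma linear0_fun : linear (fun _ : M => 0 : M).
Proof. by move=> k x y; rewrite scaler0 addr0. Qed.

Lemma linearN_fun (f : lend) : linear (fun x => - f x).
Proof. by move=> k x y; rewrite lend_linear opprD scalerN. Qed.

Lemma linearD_fun (f g : lend) : linear (fun x => f x + g x).
Proof. by move=> k x y; rewrite !lend_linear scalerDr addrACA. Qed.

Lemma linear_id_fun : linear (@id M).
Proof. by []. Qed.

Lemma linear_comp_fun (f g : lend) : linear (fun x => f (g x)).
Proof. by move=> k x y; rewrite !lend_linear. Qed.

Lemma linearZ_fun k (f : lend) : linear (fun x => k *: f x).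
Proof. by move=> l x y; rewrite lend_linear scalerDr !scalerA mulrC. Qed.

Definition lend_zero := to_lend linear0_fun.
Definition lend_opp f := to_lend (linearN_fun f).
Definition lend_add f g := to_lend (linearD_fun f g).
Definition lend_one := to_lend linear_id_fun.
Definition lend_mul f g := to_lend (linear_comp_fun f g).
Definition lend_scale k f := to_lend (linearZ_fun k f).

Lemma lend_addA : associative lend_add.
Proof. by move=> f g h; apply: lendP => x; apply: addrA. Qed.
Lemma lend_addC : commutative lend_add.
Proof. by move=> f g; apply: lendP => x; apply: addrC. Qed.
Lemma lend_add0 : left_id lend_zero lend_add.
Proof. by move=> f; apply: lendP => x; apply: add0r. Qed.
Lemma lend_addN : left_inverse lend_zero lend_opp lend_add.
Proof. by move=> f; apply: lendP => x; apply: addNr. Qed.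
HB.instance Definition _ :=
  GRing.isZmodule.Build lend lend_addA lend_addC lend_add0 lend_addN.

Lemma lend_mulA : associative lend_mul.
Proof. by move=> f g h; apply: lendP. Qed.
Lemma lend_mul1 : left_id lend_one lend_mul.
Proof. by move=> f; apply: lendP. Qed.
Lemma lend_mulr1 : right_id lend_one lend_mul.
Proof. by move=> f; apply: lendP. Qed.
Lemma lend_mulDl : left_distributive lend_mul +%R.
Proof. by move=> f g h; apply: lendP. Qed.
Lemma lend_mulDr : right_distributive lend_mul +%R.
Proof. by move=> f g h; apply: lendP => x; apply: lendD. Qed.
Lemma lend_one_neq0 : lend_one != 0.
Proof.
apply/eqP => /(congr1 lend_fun) e; case: M_nontrivial => v /eqP; apply.
exact: (congr1 (fun f => f v) e).
Qed.
HB.instance Definition _ := GRing.Zmodule_isNzRing.Build lend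
  lend_mulA lend_mul1 lend_mulr1 lend_mulDl lend_mulDr lend_one_neq0.

Lemma lend_scaleA k l f : lend_scale k (lend_scale l f) = lend_scale (k * l) f.
Proof. by apply: lendP => x; apply: scalerA. Qed.
Lemma lend_scale1 : left_id 1 lend_scale.
Proof. by move=> f; apply: lendP => x; apply: scale1r. Qed.
Lemma lend_scaleDr : right_distributive lend_scale +%R.
Proof. by move=> k f g; apply: lendP => x; apply: scalerDr. Qed.
Lemma lend_scaleDl f : {morph lend_scale^~ f : k l / k + l}.
Proof. by move=> k l; apply: lendP => x; apply: scalerDl. Qed.
HB.instance Definition _ := GRing.Zmodule_isLmodule.Build R lend
  lend_scaleA lend_scale1 lend_scaleDr lend_scaleDl.

Lemma lend_scaleAl k (f g : lend) : k *: (f * g) = (k *: f) * g.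
Proof. by apply: lendP. Qed.
HB.instance Definition _ := GRing.Lmodule_isLalgebra.Build R lend lend_scaleAl.

Lemma lend_scaleAr k (f g : lend) : k *: (f * g) = f * (k *: g).
Proof. by apply: lendP => x; rewrite /= lendZ. Qed.
HB.instance Definition _ := GRing.Lalgebra_isAlgebra.Build R lend lend_scaleAr.

End LinearEndomorphisms.

(** * The module of right fractions *)

Section RightFractions.
Variables (A : algType CC) (S : A -> Prop).
Hypothesis SM : forall x y, S x -> S y -> S (x * y).
Hypothesis S1 : S 1.
Hypothesis S_neq0 : ~ S 0.
Hypothesis ore : forall x s, S s -> exists y t, S t /\ x * t = s * y.
Hypothesis rannihilator : forall s x, S s -> s * x = 0 -> exists t, S t /\ x * t = 0.
Implicit Types (a b r u : A) (x y z : A * A).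

Lemma ore_common u v : S u -> S v -> exists p q, u * p = v * q /\ S (u * p).
Proof.
move=> hu hv; have [y [t [ht e]]] := ore v hu.
by exists y, t; rewrite -e; split => //; apply: SM.
Qed.

Definition rtorsion_eq a b := exists t, S t /\ a * t = b * t.

Lemma rtorsion_eq_cancel u a b : S u -> u * a = u * b -> rtorsion_eq a b.
Proof.
move=> hu e; have [t [ht et]] : exists t, S t /\ (a - b) * t = 0.
  by apply: rannihilator hu _; rewrite mulrBr e subrr.
by exists t; split => //; apply/eqP; rewrite -subr_eq0 -mulrBl et.
Qed.

Lemma rtorsion_eq_mull r a b : rtorsion_eq a b -> rtorsion_eq (r * a) (r * b).
Proof. by case=> t [ht e]; exists t; rewrite -!mulrA e. Qed.

Lemma rtorsion_eqD a b a' b' :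
  rtorsion_eq a b -> rtorsion_eq a' b' -> rtorsion_eq (a + a') (b + b').
Proof.
case=> t [ht e] [t' [ht' e']]; have [p [q [epq hp]]] := ore_common ht ht'.
by exists (t * p); split=> //; rewrite !mulrDl {2 4}epq !mulrA e e'.
Qed.

(* A pair (a, u) stands for the right fraction a u^-1. *)
Definition frac_rel x y := [/\ S x.2, S y.2 &
  exists c c', [/\ x.2 * c = y.2 * c', S (x.2 * c) & x.1 * c = y.1 * c']].

Lemma frac_rel_torsion x y c c' : S x.2 -> S y.2 ->
  x.2 * c = y.2 * c' -> S (x.2 * c) -> rtorsion_eq (x.1 * c) (y.1 * c') ->
  frac_rel x y.
Proof.
move=> hx hy e hc [t [ht et]]; split=> //.
by exists (c * t), (c' * t); rewrite !mulrA e; split=> //; apply: SM => //; rewrite -e.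
Qed.

Lemma frac_rel_refl x : S x.2 -> frac_rel x x.
Proof. by move=> hx; split=> //; exists 1, 1; rewrite !mulr1. Qed.

Lemma frac_rel_sym x y : frac_rel x y -> frac_rel y x.
Proof. by case=> hx hy [c [c' [e hc e']]]; split=> //; exists c', c; rewrite -e. Qed.

Lemma frac_rel_trans x y z : frac_rel x y -> frac_rel y z -> frac_rel x z.
Proof.
case=> hx hy [c1 [c1' [e1 h1 f1]]] [_ hz [c2 [c2' [e2 h2 f2]]]].
have [p [q [epq hp]]] := ore_common h1 h2.
apply: (@frac_rel_torsion _ _ (c1 * p) (c2' * q)); rewrite ?mulrA //.
  by rewrite epq e2.
rewrite f1 -f2 -!mulrA; apply: rtorsion_eq_mull.
by apply: (rtorsion_eq_cancel hy); rewrite !mulrA -e1 epq.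
Qed.

(* Pairs whose denominator is not in S are sent to the class of 0. *)
Definition frac_norm x := if `[< S x.2 >] then x else (0, 1).

Lemma frac_normS x : S (frac_norm x).2.
Proof. by rewrite /frac_norm; case: asboolP. Qed.

Lemma frac_normE x : S x.2 -> frac_norm x = x.
Proof. by rewrite /frac_norm; case: asboolP. Qed.

Definition frac_class (P : A * A -> Prop) : bool :=
  `[< exists x, S x.2 /\ P = frac_rel x >].
Definition rfrac := {P : A * A -> Prop | frac_class P}.
HB.instance Definition _ := Choice.on rfrac.

Definition frac x : rfrac :=
  exist _ (frac_rel (frac_norm x)) (asboolT (ex_intro _ _ (conj (frac_normS x) erefl))).
Definition frac_repr (v : rfrac) : A * A := sval (cid (asboolW (valP v))).

Lemma frac_reprP v : S (frac_repr v).2 /\ sval v = frac_rel (frac_repr v).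
Proof. by rewrite /frac_repr; case: cid. Qed.

Lemma frac_reprS v : S (frac_repr v).2.
Proof. by case: (frac_reprP v). Qed.

Lemma frac_reprK v : frac (frac_repr v) = v.
Proof. by have [hv e] := frac_reprP v; apply: val_inj; rewrite /frac /= frac_normE. Qed.

Lemma frac_rel_eq x y : frac_rel x y -> frac_rel x = frac_rel y.
Proof.
move=> h; apply: funext => z; apply: propext.
by split=> [/(frac_rel_trans (frac_rel_sym h))|/(frac_rel_trans h)].
Qed.

Lemma frac_relP x y : frac_rel x y -> frac x = frac y.
Proof.
move=> h; case: (h) => hx hy _.
by apply: val_inj; rewrite /frac /= !frac_normE //; apply: frac_rel_eq.
Qed.

Lemma frac_inj x y : S x.2 -> S y.2 -> frac x = frac y -> frac_rel x y.
Proof.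
by move=> hx hy /(congr1 val); rewrite /frac /= !frac_normE // => ->; apply: frac_rel_refl.
Qed.

Lemma frac_repr_rel x : S x.2 -> frac_rel (frac_repr (frac x)) x.
Proof.
move=> hx; apply: frac_inj; rewrite ?frac_reprK //; exact: frac_reprS.
Qed.

Lemma rfrac_ind (P : rfrac -> Prop) : (forall x, S x.2 -> P (frac x)) -> forall v, P v.
Proof. by move=> H v; rewrite -(frac_reprK v); apply/H/frac_reprS. Qed.

Lemma frac_rel_lift x y (f : A -> A) : (forall a c, f a * c = f (a * c)) ->
  frac_rel x y -> frac_rel (f x.1, x.2) (f y.1, y.2).
Proof.
by move=> fM [hx hy [c [c' [e hc e']]]]; split=> //; exists c, c'; rewrite !fM e'.
Qed.

Lemma frac_lift x (f : A -> A) : (forall a c, f a * c = f (a * c)) -> S x.2 ->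
  frac (f (frac_repr (frac x)).1, (frac_repr (frac x)).2) = frac (f x.1, x.2).
Proof. by move=> fM hx; apply/frac_relP/frac_rel_lift/frac_repr_rel. Qed.

Lemma frac_rel0 u : S u -> frac_rel (0, u) (0, 1).
Proof. by move=> hu; split=> //; exists 1, u; rewrite !mulr1 mul1r !mul0r. Qed.

Lemma frac_rel_mulr a u c : S u -> S c -> frac_rel (a * c, u * c) (a, u).
Proof. by move=> hu hc; have huc := SM hu hc; split=> //; exists 1, c; rewrite !mulr1. Qed.

Lemma ore_pair_ex u v :
  exists pq : A * A, S u -> S v -> u * pq.1 = v * pq.2 /\ S (u * pq.1).
Proof.
have [[hu hv]|nS] := pselect (S u /\ S v); last by exists (0, 0) => hu hv; case: nS.
by have [p [q h]] := ore_common hu hv; exists (p, q).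
Qed.

Definition ore_pair u v : A * A := sval (cid (ore_pair_ex u v)).

Lemma ore_pairP u v : S u -> S v ->
  u * (ore_pair u v).1 = v * (ore_pair u v).2 /\ S (u * (ore_pair u v).1).
Proof. by rewrite /ore_pair; case: cid => pq; apply. Qed.

Lemma ore_div_ex a s : exists yt : A * A, S s -> S yt.2 /\ a * yt.2 = s * yt.1.
Proof.
have [hs|nS] := pselect (S s); last by exists (0, 0) => hs; case: nS.
by have [y [t h]] := ore a hs; exists (y, t).
Qed.

(* In the localization, s^-1 a = y t^-1 for (y, t) = ore_div a s. *)
Definition ore_div a s : A * A := sval (cid (ore_div_ex a s)).

Lemma ore_divP a s : S s -> S (ore_div a s).2 /\ a * (ore_div a s).2 = s * (ore_div a s).1.
Proof. by rewrite /ore_div; case: cid => yt; apply. Qed.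

Definition frac_add x y : A * A :=
  (x.1 * (ore_pair x.2 y.2).1 + y.1 * (ore_pair x.2 y.2).2, x.2 * (ore_pair x.2 y.2).1).

Lemma frac_addS x y : S x.2 -> S y.2 -> S (frac_add x y).2.
Proof. by move=> hx hy; case: (ore_pairP hx hy). Qed.

Lemma frac_add_common x y p q : S x.2 -> S y.2 -> S (x.2 * p) ->
  x.2 * p = y.2 * q -> frac_rel (frac_add x y) (x.1 * p + y.1 * q, x.2 * p).
Proof.
move=> hx hy hp e; have [e0 hp0] := ore_pairP hx hy.
have [c [c' [ec hc]]] := ore_common hp0 hp.
apply: (@frac_rel_torsion (frac_add x y) (_, _) c c' _ hp ec hc).
  exact: frac_addS.
rewrite !mulrDl -!mulrA; apply: rtorsion_eqD; apply/rtorsion_eq_mull.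
  by apply: (rtorsion_eq_cancel hx); rewrite !mulrA.
by apply: (rtorsion_eq_cancel hy); rewrite !mulrA -e0 -e.
Qed.

Lemma frac_add_same a b u : S u -> frac_rel (frac_add (a, u) (b, u)) (a + b, u).
Proof.
by move=> hu; have := @frac_add_common (a, u) (b, u) 1 1 hu hu; rewrite !mulr1; apply.
Qed.

Lemma frac_addC x y : S x.2 -> S y.2 -> frac_rel (frac_add x y) (frac_add y x).
Proof.
move=> hx hy; have [e hp] := ore_pairP hy hx.
by rewrite {2}/frac_add addrC e; apply: frac_add_common; rewrite -?e.
Qed.

Lemma frac_rel_addl x x' y : frac_rel x x' -> S y.2 ->
  frac_rel (frac_add x y) (frac_add x' y).
Proof.
case=> hx hx' [c [c' [e hc e']]] hy; have [p [q [epq hp]]] := ore_common hc hy.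
have h1 : frac_rel (frac_add x y) (x.1 * (c * p) + y.1 * q, x.2 * (c * p)).
  by apply: frac_add_common; rewrite ?mulrA.
have h2 : frac_rel (frac_add x' y) (x'.1 * (c' * p) + y.1 * q, x'.2 * (c' * p)).
  by apply: frac_add_common; rewrite ?mulrA -?e.
by apply: frac_rel_trans h1 _; rewrite !mulrA e e' -!mulrA; apply: frac_rel_sym.
Qed.

Lemma frac_rel_add x x' y y' : frac_rel x x' -> frac_rel y y' ->
  frac_rel (frac_add x y) (frac_add x' y').
Proof.
move=> hxx' hyy'; case: (hxx') (hyy') => hx hx' _ [hy hy' _].
apply: frac_rel_trans (frac_rel_addl hxx' hy) _.
apply: frac_rel_trans (frac_addC hx' hy) _.
apply: frac_rel_trans (frac_rel_addl hyy' hx') _.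
exact: frac_addC.
Qed.

Definition rfrac_add v w := frac (frac_add (frac_repr v) (frac_repr w)).
Definition rfrac_opp v := frac (- (frac_repr v).1, (frac_repr v).2).
Definition rfrac_zero := frac (0, 1).

Lemma rfrac_add_frac x y : S x.2 -> S y.2 ->
  rfrac_add (frac x) (frac y) = frac (frac_add x y).
Proof.
move=> hx hy; apply: frac_relP.
by apply: frac_rel_add; apply: frac_repr_rel.
Qed.

Lemma rfrac_opp_frac x : S x.2 -> rfrac_opp (frac x) = frac (- x.1, x.2).
Proof. exact/frac_lift/mulNr. Qed.

Lemma rfrac_addA : associative rfrac_add.
Proof.
elim/rfrac_ind => x hx; elim/rfrac_ind => y hy; elim/rfrac_ind => z hz.
rewrite !rfrac_add_frac //; try exact: frac_addS.
apply: frac_relP.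
case: x y z hx hy hz => [a u] [b v] [e w] /= hu hv hw; rewrite /frac_add /=.
have [Eqr Sqr] := ore_pairP hv hw.
have [EPQ SPQ] := ore_pairP hu Sqr.
have [E12 S12] := ore_pairP hu hv.
have [E2 S2] := ore_pairP S12 hw.
have [c [c' [ec hc]]] := ore_common SPQ S2.
apply: (@frac_rel_torsion _ _ c c') => //=.
rewrite !mulrDl -!mulrA -addrA.
apply: rtorsion_eqD; last apply: rtorsion_eqD; apply/rtorsion_eq_mull.
- by apply: (rtorsion_eq_cancel hu); rewrite !mulrA.
- by apply: (rtorsion_eq_cancel hv); rewrite !mulrA -E12 -EPQ.
- by apply: (rtorsion_eq_cancel hw); rewrite !mulrA -E2 -Eqr -EPQ.
Qed.

Lemma rfrac_addC : commutative rfrac_add.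
Proof.
elim/rfrac_ind => x hx; elim/rfrac_ind => y hy.
by rewrite !rfrac_add_frac //; apply: frac_relP; apply: frac_addC.
Qed.

Lemma rfrac_add0 : left_id rfrac_zero rfrac_add.
Proof.
elim/rfrac_ind => x hx; rewrite rfrac_add_frac //; apply: frac_relP.
case: x hx => a u /= hu; have := @frac_add_common (0, 1) (a, u) u 1 S1 hu.
by rewrite /= mul1r mul0r add0r !mulr1; apply.
Qed.

Lemma rfrac_addN : left_inverse rfrac_zero rfrac_opp rfrac_add.
Proof.
elim/rfrac_ind => x hx; rewrite rfrac_opp_frac // rfrac_add_frac //.
apply: frac_relP; case: x hx => a u /= hu.
by apply: frac_rel_trans (frac_add_same _ _ hu) _; rewrite addNr; apply: frac_rel0.
Qed.
HB.instance Definition _ :=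
  GRing.isZmodule.Build rfrac rfrac_addA rfrac_addC rfrac_add0 rfrac_addN.

Lemma rfrac_addE x y : S x.2 -> S y.2 -> frac x + frac y = frac (frac_add x y).
Proof. exact: rfrac_add_frac. Qed.

Lemma rfrac0E : 0 = frac (0, 1).
Proof. by []. Qed.

Definition rfrac_scale (k : CC) v := frac (k *: (frac_repr v).1, (frac_repr v).2).

Lemma rfrac_scale_frac k x : S x.2 -> rfrac_scale k (frac x) = frac (k *: x.1, x.2).
Proof. by apply: frac_lift => a c; rewrite scalerAl. Qed.

Lemma rfrac_scaleA k l v : rfrac_scale k (rfrac_scale l v) = rfrac_scale (k * l) v.
Proof. by elim/rfrac_ind: v => x hx; rewrite !rfrac_scale_frac // scalerA. Qed.

Lemma rfrac_scale1 : left_id 1 rfrac_scale.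
Proof. by elim/rfrac_ind => x hx; rewrite rfrac_scale_frac // scale1r; case: x hx. Qed.

Lemma rfrac_scaleDr : right_distributive rfrac_scale +%R.
Proof.
move=> k; elim/rfrac_ind => x hx; elim/rfrac_ind => y hy.
rewrite rfrac_addE // !rfrac_scale_frac //; last exact: frac_addS.
by rewrite rfrac_addE // /frac_add /= scalerDr !scalerAl.
Qed.

Lemma rfrac_scaleDl v : {morph rfrac_scale^~ v : k l / k + l}.
Proof.
elim/rfrac_ind: v => x hx k l; rewrite !rfrac_scale_frac // rfrac_addE //.
apply: frac_relP; apply/frac_rel_sym.
by case: x hx => a u /= hu; rewrite scalerDl; apply: frac_add_same.
Qed.
HB.instance Definition _ := GRing.Zmodule_isLmodule.Build CC rfrac
  rfrac_scaleA rfrac_scale1 rfrac_scaleDr rfrac_scaleDl.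

Lemma rfrac_scaleE k x : S x.2 -> k *: frac x = frac (k *: x.1, x.2).
Proof. exact: rfrac_scale_frac. Qed.

Definition rfrac_act r v := frac (r * (frac_repr v).1, (frac_repr v).2).

Lemma rfrac_actE r x : S x.2 -> rfrac_act r (frac x) = frac (r * x.1, x.2).
Proof. by apply: frac_lift => a c; rewrite mulrA. Qed.

Lemma rfrac_act_linear r : linear (rfrac_act r).
Proof.
move=> k; elim/rfrac_ind => x hx; elim/rfrac_ind => y hy.
rewrite rfrac_scaleE // rfrac_addE // !rfrac_actE //; last exact: frac_addS.
by rewrite rfrac_scaleE // rfrac_addE //= /frac_add /= mulrDr !mulrA -scalerAr.
Qed.

Lemma rfrac_actM r1 r2 v : rfrac_act (r1 * r2) v = rfrac_act r1 (rfrac_act r2 v).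
Proof. by elim/rfrac_ind: v => x hx; rewrite !rfrac_actE // mulrA. Qed.

Lemma rfrac_act1 v : rfrac_act 1 v = v.
Proof. by elim/rfrac_ind: v => x hx; rewrite rfrac_actE // mul1r; case: x hx. Qed.

Lemma rfrac_actDl r1 r2 v : rfrac_act (r1 + r2) v = rfrac_act r1 v + rfrac_act r2 v.
Proof.
elim/rfrac_ind: v => x hx; rewrite !rfrac_actE // rfrac_addE //.
by apply: frac_relP; apply/frac_rel_sym; rewrite mulrDl; apply: frac_add_same.
Qed.

Lemma rfrac_actZl k r v : rfrac_act (k *: r) v = k *: rfrac_act r v.
Proof. by elim/rfrac_ind: v => x hx; rewrite !rfrac_actE // rfrac_scaleE // scalerAl. Qed.

Definition rfrac_div s v :=
  frac ((ore_div (frac_repr v).1 s).1, (frac_repr v).2 * (ore_div (frac_repr v).1 s).2).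

Lemma rfrac_divK s v : S s -> rfrac_act s (rfrac_div s v) = v.
Proof.
move=> hs; have [ht e] := ore_divP (frac_repr v).1 hs; have hv := frac_reprS v.
rewrite /rfrac_div rfrac_actE /=; last exact: SM.
rewrite -e -[RHS]frac_reprK.
by apply/frac_relP/frac_rel_mulr.
Qed.

Lemma rfrac_act_eq0 s v : S s -> rfrac_act s v = 0 -> v = 0.
Proof.
move=> hs; elim/rfrac_ind: v => x hx; rewrite rfrac_actE // rfrac0E.
move=> /(@frac_inj (s * x.1, x.2) (0, 1) hx S1) [_ _ [c [c' [/= e hc]]]].
rewrite mul0r -mulrA => /(rannihilator hs) [t [ht et]].
apply/frac_relP/(@frac_rel_torsion _ (0, 1) c c') => //=.
by exists t; rewrite et !mul0r.
Qed.

Lemma rfrac_act_injective s : S s -> injective (rfrac_act s).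
Proof.
move=> hs v w e; apply/eqP; rewrite -subr_eq0; apply/eqP; apply: (rfrac_act_eq0 hs).
by rewrite (GRing.zmod_morphism_linear (rfrac_act_linear s)) e subrr.
Qed.

Lemma rfrac_actK s v : S s -> rfrac_div s (rfrac_act s v) = v.
Proof. by move=> hs; apply: (rfrac_act_injective hs); rewrite rfrac_divK. Qed.

Lemma rfrac_nontrivial : exists v : rfrac, v != 0.
Proof.
exists (frac (1, 1)); apply/eqP; rewrite rfrac0E.
move=> /(@frac_inj (1, 1) (0, 1) S1 S1) [_ _ [c [c' [_ hc e]]]].
by apply: S_neq0; move: hc; rewrite /= e mul0r.
Qed.

Definition left_mul r : lend_of rfrac_nontrivial :=
  to_lend rfrac_nontrivial (rfrac_act_linear r).

Lemma left_mul_zmod_morphism : zmod_morphism left_mul.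
Proof.
move=> r1 r2; apply: lendP => v /=.
by rewrite rfrac_actDl -[- r2]scaleN1r rfrac_actZl scaleN1r.
Qed.
HB.instance Definition _ := GRing.isZmodMorphism.Build A _ left_mul left_mul_zmod_morphism.

Lemma left_mul_multiplicative : monoid_morphism left_mul.
Proof. by split=> [|r1 r2]; apply: lendP => v /=; rewrite (rfrac_act1, rfrac_actM). Qed.
HB.instance Definition _ :=
  GRing.isMonoidMorphism.Build A _ left_mul left_mul_multiplicative.

Lemma left_mul_scalable : scalable left_mul.
Proof. by move=> k r; apply: lendP => v /=; rewrite rfrac_actZl. Qed.
HB.instance Definition _ := GRing.isScalable.Build CC A _ *:%R left_mul left_mul_scalable.

Lemma left_mul_invertible s : S s -> invertible (left_mul s).
Proof.
move=> hs; have divL : linear (rfrac_div s).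
  by move=> k v w; apply: (rfrac_act_injective hs); rewrite rfrac_act_linear !rfrac_divK.
exists (to_lend rfrac_nontrivial divL).
by split; apply: lendP => v /=; rewrite (rfrac_divK, rfrac_actK).
Qed.

Lemma left_mul_eq0 w : left_mul w = 0 -> exists t, S t /\ w * t = 0.
Proof.
move=> /(congr1 (fun f => lend_fun f (frac (1, 1)))) /=; rewrite rfrac_actE // mulr1.
move=> /(@frac_inj (w, 1) (0, 1) S1 S1) [_ _ [c [c' [_ hc e]]]].
by exists c; rewrite e mul0r -[c]mul1r.
Qed.

End RightFractions.

Lemma ore_inverting_rmorph (A : algType CC) (S : A -> Prop) :
    (forall x y, S x -> S y -> S (x * y)) -> S 1 -> ~ S 0 ->
    (forall x s, S s -> exists y t, S t /\ x * t = s * y) ->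
    (forall s x, S s -> s * x = 0 -> exists t, S t /\ x * t = 0) ->
  exists (T : algType CC) (g : {lrmorphism A -> T}),
    (forall s, S s -> invertible (g s)) /\
    (forall w, g w = 0 -> exists t, S t /\ w * t = 0).
Proof.
move=> SM S1 S0 ore rann.
exists _, (left_mul SM S1 S0 ore rann).
by split; [exact: left_mul_invertible | exact: left_mul_eq0].
Qed.

(** * The filtration of the localization *)

Section Localization.
Variables (A B : algType CC) (S : A -> Prop) (iota : {lrmorphism A -> B}) (N : nat).
Hypothesis ncF_N : forall i, (N <= i)%N -> forall x : A, ncF i x -> x = 0.
Hypothesis SM : forall x y, S x -> S y -> S (x * y).
Hypothesis S1 : S 1.
Hypothesis S_neq0 : ~ S 0.
Hypothesis iota_frac : is_ring_of_fractions S iota.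

Let ore := ncnil_ore ncF_N SM.

Lemma sinv_ex s : exists y : B, S s -> iota s * y = 1 /\ y * iota s = 1.
Proof.
have [hs|nS] := pselect (S s); last by exists 0.
by have [y hy] := iota_frac.1 s hs; exists y.
Qed.

Definition sinv s := sval (cid (sinv_ex s)).

Lemma sinvR s : S s -> iota s * sinv s = 1.
Proof. by rewrite /sinv; case: cid => y h /h []. Qed.

Lemma sinvL s : S s -> sinv s * iota s = 1.
Proof. by rewrite /sinv; case: cid => y h /h []. Qed.

Lemma mul_sinvR s x : S s -> x * iota s * sinv s = x.
Proof. by move=> hs; rewrite -mulrA sinvR ?mulr1. Qed.

Lemma mul_sinvL s x : S s -> x * sinv s * iota s = x.
Proof. by move=> hs; rewrite -mulrA sinvL ?mulr1. Qed.

Lemma sinvL_mul s x : S s -> sinv s * iota s * x = x.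
Proof. by move=> hs; rewrite sinvL ?mul1r. Qed.

Lemma sinvR_mul s x : S s -> iota s * sinv s * x = x.
Proof. by move=> hs; rewrite sinvR ?mul1r. Qed.

Lemma sinv1 : sinv 1 = 1.
Proof. by have := sinvL S1; rewrite rmorph1 mulr1. Qed.

Lemma sinvM s t : S s -> S t -> sinv (s * t) = sinv t * sinv s.
Proof.
move=> hs ht; rewrite -[sinv t * _]mulr1 -(sinvR (SM hs ht)) rmorphM !mulrA.
by rewrite mul_sinvL // sinvL_mul.
Qed.

Lemma sinv_mulr s p : S s -> S (s * p) -> sinv s = iota p * sinv (s * p).
Proof. by move=> hs hsp; rewrite -[sinv s]mulr1 -(sinvR hsp) rmorphM !mulrA sinvL_mul. Qed.

Lemma sinv_comm s t a y : S s -> S t -> a * t = s * y ->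
  sinv s * iota a = iota y * sinv t.
Proof.
move=> hs ht e; rewrite -[LHS](mul_sinvR _ ht) -(mulrA _ (iota a)) -rmorphM e.
by rewrite rmorphM mulrA sinvL_mul.
Qed.

Lemma iota_eq0 w : iota w = 0 -> exists t, S t /\ w * t = 0.
Proof.
have [T [g [g_inv g_ker]]] :=
  ore_inverting_rmorph SM S1 S_neq0 ore (ncnil_rannihilator ncF_N SM).
have [[h hg] _] := iota_frac.2 T g g_inv.
by move=> e; apply: g_ker; rewrite -hg e rmorph0.
Qed.

Definition is_lfrac (b : B) := exists a s, S s /\ b = iota a * sinv s.

Lemma lfrac_subalg_closed : GRing.subsemialg_closed (fun b => `[< is_lfrac b >]).
Proof.
split; first by apply/asboolP; exists 1, 1; rewrite sinv1 rmorph1 mulr1.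
- split; first by apply/asboolP; exists 0, 1; rewrite rmorph0 mul0r.
  move=> _ _ /asboolP [a1 [s1 [h1 ->]]] /asboolP [a2 [s2 [h2 ->]]]; apply/asboolP.
  have [q [p [hp e]]] := ore s2 h1.
  have hq : S (s1 * q) by rewrite -e; apply: SM.
  exists (a1 * q + a2 * p), (s1 * q); split => //.
  rewrite (sinv_mulr h1 hq) (sinv_mulr h2 (SM h2 hp)) e.
  by rewrite !mulrA -!rmorphM -mulrDl -rmorphD.
- move=> k _ /asboolP [a [s [hs ->]]]; apply/asboolP.
  by exists (k *: a), s; split => //; rewrite linearZ scalerAl.
- move=> _ _ /asboolP [a1 [s1 [h1 ->]]] /asboolP [a2 [s2 [h2 ->]]]; apply/asboolP.
  have [y [t [ht e]]] := ore a2 h1.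
  exists (a1 * y), (s2 * t); split; first exact: SM.
  by rewrite -mulrA (mulrA (sinv s1)) (sinv_comm h1 ht e) sinvM // rmorphM !mulrA.
Qed.

Definition lfrac_alg := {b : B | `[< is_lfrac b >]}.
HB.instance Definition _ :=
  [isSub for (@sval B (fun b => `[< is_lfrac b >]) : lfrac_alg -> B)].
HB.instance Definition _ := [Choice of lfrac_alg by <:].
HB.instance Definition _ := GRing.SubChoice_isSubAlgebra.Build CC B
  (fun b => `[< is_lfrac b >]) lfrac_alg lfrac_subalg_closed.

Lemma iota_is_lfrac a : `[< is_lfrac (iota a) >].
Proof. by apply/asboolP; exists a, 1; rewrite sinv1 mulr1. Qed.

Definition iota_lfrac (a : A) : lfrac_alg := exist _ (iota a) (iota_is_lfrac a).

Lemma iota_lfrac_zmod_morphism : zmod_morphism iota_lfrac.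
Proof. by move=> x y; apply: val_inj; rewrite /= rmorphB. Qed.
HB.instance Definition _ :=
  GRing.isZmodMorphism.Build A lfrac_alg iota_lfrac iota_lfrac_zmod_morphism.

Lemma iota_lfrac_monoid_morphism : monoid_morphism iota_lfrac.
Proof. by split=> [|x y]; apply: val_inj; rewrite /= (rmorph1, rmorphM). Qed.
HB.instance Definition _ :=
  GRing.isMonoidMorphism.Build A lfrac_alg iota_lfrac iota_lfrac_monoid_morphism.

Lemma iota_lfrac_scalable : scalable iota_lfrac.
Proof. by move=> k x; apply: val_inj; rewrite /= linearZ. Qed.
HB.instance Definition _ :=
  GRing.isScalable.Build CC A lfrac_alg *:%R iota_lfrac iota_lfrac_scalable.

Lemma iota_lfrac_invertible s : S s -> invertible (iota_lfrac s).
Proof.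
move=> hs; have hinv : `[< is_lfrac (sinv s) >].
  by apply/asboolP; exists 1, s; rewrite rmorph1 mul1r.
by exists (exist _ (sinv s) hinv); split; apply: val_inj; [apply: sinvR | apply: sinvL].
Qed.

Lemma val_lfrac_scalable : scalable (val : lfrac_alg -> B).
Proof. by []. Qed.
HB.instance Definition _ :=
  GRing.isScalable.Build CC lfrac_alg B *:%R val val_lfrac_scalable.

(* By uniqueness in the universal property, [val \o h] is the identity of [B]. *)
Lemma lfracP b : is_lfrac b.
Proof.
have [[h hE] _] := iota_frac.2 _ iota_lfrac iota_lfrac_invertible.
have idE := (iota_frac.2 _ iota iota_frac.1).2 idfun (val \o h) (fun=> erefl).
have -> : b = val (h b) by apply: idE => a; rewrite /= hE.
exact: asboolW (valP (h b)).
Qed.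

(* The right ideal iota(F^d A) B; it turns out to be F^d B. *)
Inductive extF (d : nat) : B -> Prop :=
  | extF_gen y c : ncF d y -> extF d (iota y * c)
  | extF0 : extF d 0
  | extFD x y : extF d x -> extF d y -> extF d (x + y).

Lemma extF_mulr d x c : extF d x -> extF d (x * c).
Proof.
elim=> [y c' hy| |u w _ Hu _ Hw].
- by rewrite -mulrA; apply: extF_gen.
- by rewrite mul0r; apply: extF0.
- by rewrite mulrDl; apply: extFD.
Qed.

Lemma extF_iota d y : ncF d y -> extF d (iota y).
Proof. by move=> hy; rewrite -[iota y]mulr1; apply: extF_gen. Qed.

Lemma extF_le p q x : (q <= p)%N -> extF p x -> extF q x.
Proof.
move=> hq; elim=> [y c hy| |u w _ Hu _ Hw].
- by apply/extF_gen/(ncF_le hq).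
- exact: extF0.
- exact: extFD.
Qed.

Lemma extF_opp d x : extF d x -> extF d (- x).
Proof. by rewrite -mulrN1; apply: extF_mulr. Qed.

Lemma extF_sub d x y : extF d x -> extF d y -> extF d (x - y).
Proof. by move=> hx hy; apply: extFD => //; apply: extF_opp. Qed.

Lemma extF_ncF d x : extF d x -> ncF d x.
Proof.
elim=> [y c hy| |u w _ Hu _ Hw].
- exact/ncF_mulr/ncF_rmorph.
- exact: ncF_zero.
- exact: ncF_add.
Qed.

Lemma extF_iota_mull d r x : extF d x -> extF d (iota r * x).
Proof.
elim=> [y c hy| |u w _ Hu _ Hw].
- by rewrite mulrA -rmorphM; apply/extF_gen/ncF_mull.
- by rewrite mulr0; apply: extF0.
- by rewrite mulrDr; apply: extFD.
Qed.

Lemma extF_iota_mul p q y x : ncF p y -> extF q x -> extF (p + q) (iota y * x).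
Proof.
move=> hy; elim=> [z c hz| |u w _ Hu _ Hw].
- by rewrite mulrA -rmorphM; apply/extF_gen/ncF_mul.
- by rewrite mulr0; apply: extF0.
- by rewrite mulrDr; apply: extFD.
Qed.

(* s^-1 y = y s^-1 + s^-1 [y, s] s^-1, and [y, s] is one step deeper. *)
Lemma extF_sinv_iota d s y : S s -> ncF d y -> extF d (sinv s * iota y).
Proof.
move=> hs; move: d y; apply: (ncF_nilpotent_ind ncF_N) => [d|d y hy IH].
  by rewrite rmorph0 mulr0; apply: extF0.
have -> : sinv s * iota y = iota y * sinv s + sinv s * iota (y * s - s * y) * sinv s.
  rewrite rmorphB !rmorphM mulrBr mulrBl !mulrA mul_sinvR // sinvL_mul //.
  by rewrite addrC subrK.
apply: extFD; first exact: extF_gen.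
by apply/extF_mulr/(extF_le _ (IH _ _)) => //; rewrite -opprB; apply/ncF_opp/ncF_comm.
Qed.

Lemma extF_mull d b x : extF d x -> extF d (b * x).
Proof.
have [a [s [hs ->]]] := lfracP b.
elim=> [y c hy| |u w _ Hu _ Hw].
- by rewrite mulrA -(mulrA _ (sinv s)); apply/extF_mulr/extF_iota_mull/extF_sinv_iota.
- by rewrite mulr0; apply: extF0.
- by rewrite mulrDr; apply: extFD.
Qed.

Lemma extF_mul p q x y : extF p x -> extF q y -> extF (p + q) (x * y).
Proof.
move=> hx hy; elim: hx => [y0 c hy0| |u w _ Hu _ Hw].
- by rewrite -mulrA; apply/extF_iota_mul/extF_mull.
- by rewrite mul0r; apply: extF0.
- by rewrite mulrDl; apply: extFD.
Qed.

Lemma extF_comm_iota q b y : ncF q y -> extF q.+1 (b * iota y - iota y * b).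
Proof.
move=> hy; have [a [s [hs ->]]] := lfracP b.
have hz : ncF q.+1 (y * s - s * y) by rewrite -opprB; apply/ncF_opp/ncF_comm.
have -> : iota a * sinv s * iota y - iota y * (iota a * sinv s) =
    iota a * (sinv s * iota (y * s - s * y) * sinv s) + iota (a * y - y * a) * sinv s.
  rewrite !rmorphB !rmorphM !mulrBr !mulrBl !mulrA mul_sinvR // sinvL_mul //.
  by rewrite mulrBr !mulrA addrA subrK.
apply: extFD; first by apply/extF_iota_mull/extF_mulr/extF_sinv_iota.
exact/extF_gen/ncF_comm.
Qed.

Lemma extF1_comm b b' : extF 1 (b * b' - b' * b).
Proof.
have [a [s [hs ->]]] := lfracP b'.
have -> : b * (iota a * sinv s) - iota a * sinv s * b =
    (b * iota a - iota a * b) * sinv s +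
    iota a * (sinv s * (- (b * iota s - iota s * b)) * sinv s).
  rewrite opprB !mulrBr !mulrBl !mulrA mul_sinvR // sinvL_mul //.
  by rewrite mulrBr !mulrA addrA subrK.
apply: extFD; first exact/extF_mulr/extF_comm_iota/ncF0.
exact/extF_mull/extF_mulr/extF_mull/extF_opp/extF_comm_iota/ncF0.
Qed.

Lemma extF_comm q b x : extF q x -> extF q.+1 (b * x - x * b).
Proof.
elim=> [y c hy| |u w _ Hu _ Hw].
- have -> : b * (iota y * c) - iota y * c * b =
      (b * iota y - iota y * b) * c + iota y * (b * c - c * b).
    by rewrite mulrBl mulrBr !mulrA addrA subrK.
  apply: extFD; first exact/extF_mulr/extF_comm_iota.
  by rewrite -addn1; apply/extF_iota_mul/extF1_comm.
- by rewrite mulr0 mul0r subrr; apply: extF0.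
- by rewrite mulrDr mulrDl opprD addrACA; apply: extFD.
Qed.

Lemma extF_lie i x : lie_term i x -> extF i.-1 x.
Proof.
elim=> [a|m a b _ IH|m|m u w _ IHu _ IHw] /=.
- by rewrite -[a]mul1r -(rmorph1 iota); apply/extF_gen/ncF0.
- exact: extF_comm.
- exact: extF0.
- exact: extFD.
Qed.

Lemma extF_nc_word a0 s e : lie_factors s ->
  (\sum_(t <- s) t.1.1)%N = (e + size s)%N -> extF e (nc_word a0 s).
Proof.
elim/last_ind: s e => [|s t IH] e v es.
  rewrite big_nil /= in es; rewrite (_ : e = 0%N); last by lia.
  by rewrite -[a0]mul1r -(rmorph1 iota); apply/extF_gen/ncF0.
move/lie_factors_rcons: v => [v [t0 tl]]; have hsz := size_le_lie_degree v.
rewrite big_rcons size_rcons /= in es; rewrite nc_word_rcons.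
have -> : e = ((\sum_(u <- s) u.1.1 - size s) + t.1.1.-1)%N by lia.
by apply/extF_mulr/extF_mul/extF_lie => //; apply: IH; rewrite ?subnK.
Qed.

Lemma ncF_extF d x : ncF d x -> extF d x.
Proof.
elim=> [_ [a0 [s [ne v e ->]]]| |u w _ Hu _ Hw].
- exact: extF_nc_word.
- exact: extF0.
- exact: extFD.
Qed.

Lemma ncnil_localization : NC_nilpotent B.
Proof.
exists N => i hi x /ncF_extF; elim=> [y c hy| |u w _ Hu _ Hw].
- by rewrite (ncF_N hi hy) rmorph0 mul0r.
- by [].
- by rewrite Hu Hw addr0.
Qed.

Lemma extF_torsion d b : extF d b -> exists u y, [/\ S u, ncF d y & b * iota u = iota y].
Proof.
elim=> [y0 c hy0| |b1 b2 _ [u1 [y1 [h1 f1 e1]]] _ [u2 [y2 [h2 f2 e2]]]].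
- have [a [s [hs ->]]] := lfracP c.
  exists s, (y0 * a); split => //; first exact: ncF_mulr.
  by rewrite !mulrA mul_sinvL // rmorphM.
- by exists 1, 0; split => //; [exact: ncF_zero | rewrite mul0r rmorph0].
- have [q [p [hp e]]] := ore u2 h1.
  have hq : S (u1 * q) by rewrite -e; apply: SM.
  exists (u1 * q), (y1 * q + y2 * p); split => //.
  + by apply: ncF_add; apply: ncF_mulr.
  + by rewrite mulrDl -{2}e !rmorphM !mulrA e1 e2 -!rmorphM rmorphD.
Qed.

Definition lfrac (m s : A) : B := sinv s * iota m.

Lemma extF_lfrac_cross d m m' s s' : ncF d m -> ncF d m' -> S s -> S s' ->
  extF d.+1 (iota s * iota s' * (lfrac m s - lfrac m' s') - iota (s' * m - s * m')).
Proof.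
move=> hm hm' hs hs'.
have -> : iota s * iota s' * (lfrac m s - lfrac m' s') - iota (s' * m - s * m') =
    iota s * (iota s' * (sinv s * iota m) - sinv s * iota m * iota s')
    - (iota s' * iota m - iota m * iota s').
  rewrite /lfrac rmorphB !rmorphM !mulrBr !mulrA mul_sinvR // sinvR_mul //.
  by rewrite !opprB !addrA !subrK.
apply: extF_sub; last exact/extF_comm/extF_iota.
exact/extF_iota_mull/extF_comm/extF_mull/extF_iota.
Qed.

Lemma lfrac_eq d m s m' s' : ncF d m -> S s -> ncF d m' -> S s' ->
  (exists t, S t /\ ncF d.+1 (t * (s' * m - s * m'))) ->
  ncF d.+1 (lfrac m s - lfrac m' s').
Proof.
move=> hm hs hm' hs' [t [ht hz]]; apply: extF_ncF.
set D := lfrac m s - lfrac m' s'.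
have H : extF d.+1 (iota t * (iota s * iota s' * D)).
  rewrite -[iota s * iota s' * D](subrK (iota (s' * m - s * m'))) mulrDr.
  apply: extFD; first exact/extF_iota_mull/extF_lfrac_cross.
  by rewrite -rmorphM; apply: extF_iota.
have hts : S (t * s * s') by apply: SM => //; apply: SM.
rewrite -[D](sinvL_mul _ hts) -mulrA; apply: extF_mull.
by rewrite !rmorphM -!mulrA; rewrite !mulrA in H *.
Qed.

Lemma lfrac_eq_frac d m s m' s' : ncF d m -> S s -> ncF d m' -> S s' ->
  ncF d.+1 (lfrac m s - lfrac m' s') ->
  exists t, S t /\ ncF d.+1 (t * (s' * m - s * m')).
Proof.
move=> hm hs hm' hs' hD; set z := s' * m - s * m'.
have hz : extF d.+1 (iota z).
  set X := iota s * iota s' * (lfrac m s - lfrac m' s').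
  have -> : iota z = X - (X - iota z) by rewrite opprB addrC subrK.
  apply: extF_sub; last exact: extF_lfrac_cross.
  by rewrite /X -mulrA; apply/extF_mull/extF_mull/ncF_extF.
have [u [y [hu hy e]]] := extF_torsion hz.
have [t [ht et]] : exists t, S t /\ (z * u - y) * t = 0.
  by apply: iota_eq0; rewrite rmorphB rmorphM e subrr.
exists (u * t); split; first exact: SM.
have hzut : ncF d.+1 (z * (u * t)).
  by move/eqP: et; rewrite mulrBl subr_eq0 mulrA => /eqP ->; apply: ncF_mulr.
rewrite -[_ * z](subrK (z * (u * t))); apply: ncF_add => //.
by apply: ncF_comm; apply: ncF_sub; apply: ncF_mull.
Qed.

Lemma lfrac_add d m s m' s' : ncF d m -> S s -> ncF d m' -> S s' ->
  ncF d.+1 (lfrac (s' * m + s * m') (s * s') - (lfrac m s + lfrac m' s')).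
Proof.
move=> hm hs hm' hs'; apply: extF_ncF.
set h := sinv s * iota m.
have -> : lfrac (s' * m + s * m') (s * s') - (lfrac m s + lfrac m' s') =
    sinv s' * sinv s * (iota s' * iota m - iota m * iota s') +
    (sinv s' * h - h * sinv s') * iota s'.
  rewrite /lfrac /h sinvM // rmorphD !rmorphM mulrDr !mulrA mul_sinvL //.
  rewrite !mulrBr !mulrBl !mulrA mul_sinvL //.
  by rewrite opprD addrACA subrr addr0 addrA subrK.
apply: extFD; first exact/extF_mull/extF_comm/extF_iota.
exact/extF_mulr/extF_comm/extF_mull/extF_iota.
Qed.

Lemma lfrac_mull d r m s : ncF d m -> S s ->
  ncF d.+1 (lfrac (r * m) s - iota r * lfrac m s).
Proof.
move=> hm hs; apply: extF_ncF.
have -> : lfrac (r * m) s - iota r * lfrac m s =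
    (sinv s * iota r - iota r * sinv s) * iota m.
  by rewrite /lfrac rmorphM mulrBl !mulrA.
by rewrite -add1n; apply/extF_mul/extF_iota => //; apply/extF_comm_iota/ncF0.
Qed.

Lemma lfrac_surj d y : ncF d y ->
  exists m s, [/\ ncF d m, S s & ncF d.+1 (lfrac m s - y)].
Proof.
move/ncF_extF; elim=> [y0 c hy0| |y1 y2 _ [m1 [s1 [hm1 hs1 e1]]] _ [m2 [s2 [hm2 hs2 e2]]]].
- have [a [s [hs ->]]] := lfracP c.
  exists (y0 * a), s; split => //; first exact: ncF_mulr.
  by apply: extF_ncF; rewrite /lfrac !mulrA -rmorphM; apply/extF_comm/extF_iota/ncF_mulr.
- exists 0, 1; split => //; first exact: ncF_zero.
  by rewrite /lfrac rmorph0 mulr0 subr0; apply: ncF_zero.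
- exists (s2 * m1 + s1 * m2), (s1 * s2); split.
  + by apply: ncF_add; apply: ncF_mull.
  + exact: SM.
  + rewrite -[lfrac _ _](subrK (lfrac m1 s1 + lfrac m2 s2)) -addrA.
    apply: ncF_add; first exact: lfrac_add.
    by rewrite opprD addrACA; apply: ncF_add.
Qed.

Lemma lfrac_gr_iso d : frac_gr_iso S iota d lfrac.
Proof.
split.
- by move=> m s hm hs; apply/ncF_mull/ncF_rmorph.
- by move=> m s m' s' hm hs hm' hs'; split; [apply: lfrac_eq | apply: lfrac_eq_frac].
- exact: lfrac_surj.
- exact: lfrac_add.
- exact: lfrac_mull.
Qed.

End Localization.

Theorem theorem2p1p6 (A : algType CC) (S : A -> Prop) (B : algType CC)
    (iota : {lrmorphism A -> B}) :
  NC_nilpotent A ->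
  preimage_of_mult_subset_ab S ->
  is_ring_of_fractions S iota ->
  NC_nilpotent B /\
  (forall d : nat, exists phi : A -> A -> B, frac_gr_iso S iota d phi).
Proof.
move=> [N ncF_N] [_ S1 SM S_F1] iota_frac.
have S_neq0 : ~ S 0 by move=> /S_F1; apply; apply: ncF_zero.
split; first exact: ncnil_localization ncF_N SM S1 iota_frac.
by move=> d; exists (lfrac iota_frac); apply: (lfrac_gr_iso ncF_N SM S1 S_neq0).
Qed.
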